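(* Let $M$ be a $*$-left Ehresmann monoid with $M=\langle H\rangle_{(2)}$ for an atomic subset $H$. If $m=h_1h_2\cdots h_n$ with $h_i\in H$ for $1\le i\le n$, then $m$ has an expression $m=k_1\cdots k_p$ in $H$-canonical form with $p\le n$.
   Context: A $*$-left Ehresmann monoid is a monoid $M$ with unary operations $+,*$ such that $x^+x=x$, $(x^+y^+)^+=x^+y^+$, $x^+y^+=y^+x^+$, $(xy)^+=(xy^+)^+$, $xx^*=x$, $(x^* )^*=x^*$, $x^*y^*=y^*x^*$, $(xy^* )^*y^*=(xy^* )^*$, $(x^* )^+=x^*$, $(x^+)^*=x^+$. Projections: $E=\{a^+\}=\{a^*\}$, ordered by $e\le f$ iff $ef=e$; $\sigma$ is the least monoid congruence containing $E\times E$; $\langle H\rangle_{(2)}$ is the subsemigroup generated by $H$. $H$ is atomic if: (H1) $E\subseteq H$; (H2) $h\in H,e\in E$ imply $he\in H$ and $(he)^*=h^*e$; (H3) if $h\in H$, $k\in H\setminus E$, $h^*\ge k^+$ then $hk\in H$ and $(hk)^*=k^*$; (H4) every $m\in M$ is $\sigma$-related to some $h\in H$; (H5) if $h,k,w\in H$, $hk\,\sigma\,w$ and $k^*=w^*$, then some $u\in H$ has $u\,\sigma\,h$ and $u^*\ge k^+$. An expression $m=h_1\cdots h_n$ ($n\ge1$, $h_i\in H$) is in $H$-canonical form if $h_i^*<h_{i+1}^+$ for $1\le i<n$ and $h_i\notin E$ for $2\le i\le n$. *)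

From mathcomp Require Import all_boot.
Set Implicit Arguments. Unset Strict Implicit. Unset Printing Implicit Defensive.

Record StarLeftEhresmann (T : Type) (mul : T -> T -> T) (one : T)
    (plus star : T -> T) : Prop := {
  sle_assoc : forall x y z, mul x (mul y z) = mul (mul x y) z;
  sle_mul1l : forall x, mul one x = x;
  sle_mulr1 : forall x, mul x one = x;
  sle_plus_l : forall x, mul (plus x) x = x;
  sle_plus_idem : forall x y, plus (mul (plus x) (plus y)) = mul (plus x) (plus y);
  sle_plus_comm : forall x y, mul (plus x) (plus y) = mul (plus y) (plus x);
  sle_plus_mul : forall x y, plus (mul x y) = plus (mul x (plus y));
  sle_star_r : forall x, mul x (star x) = x;
  sle_star_star : forall x, star (star x) = star x;
  sle_star_comm : forall x y, mul (star x) (star y) = mul (star y) (star x);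
  sle_star_mul : forall x y, mul (star (mul x (star y))) (star y) = star (mul x (star y));
  sle_plus_star : forall x, plus (star x) = star x;
  sle_star_plus : forall x, star (plus x) = plus x
}.

Section Defs.
Variables (T : Type) (mul : T -> T -> T) (one : T) (plus star : T -> T).

Definition inE (x : T) : Prop := exists a, x = plus a.

Definition ple (e f : T) : Prop := mul e f = e.
Definition plt (e f : T) : Prop := ple e f /\ e <> f.

Definition monoid_congruence (R : T -> T -> Prop) : Prop :=
  (forall x, R x x) /\ (forall x y, R x y -> R y x) /\
  (forall x y z, R x y -> R y z -> R x z) /\
  (forall x y z, R x y -> R (mul z x) (mul z y) /\ R (mul x z) (mul y z)).

Definition sigma (x y : T) : Prop :=
  forall R, monoid_congruence R -> (forall e f, inE e -> inE f -> R e f) -> R x y.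

Definition lprod (s : seq T) : T := foldr mul one s.

Definition all_in (H : T -> Prop) (s : seq T) : Prop :=
  forall i, i < size s -> H (nth one s i).

(* M = <H>_(2): every element is a product of a nonempty word over H *)
Definition generates2 (H : T -> Prop) : Prop :=
  forall m, exists s, 0 < size s /\ all_in H s /\ m = lprod s.

Definition atomic (H : T -> Prop) : Prop :=
  (forall e, inE e -> H e) /\
  (forall h e, H h -> inE e -> H (mul h e) /\ star (mul h e) = mul (star h) e) /\
  (forall h k, H h -> H k -> ~ inE k -> ple (plus k) (star h) ->
              H (mul h k) /\ star (mul h k) = star k) /\
  (forall m, exists h, H h /\ sigma m h) /\
  (forall h k w, H h -> H k -> H w -> sigma (mul h k) w -> star k = star w ->
              exists u, H u /\ sigma u h /\ ple (plus k) (star u)).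

Definition canonical_form (H : T -> Prop) (s : seq T) : Prop :=
  0 < size s /\ all_in H s /\
  (forall i, i.+1 < size s -> plt (star (nth one s i)) (plus (nth one s i.+1))) /\
  (forall i, 0 < i < size s -> ~ inE (nth one s i)).

End Defs.

From Pilot Require Import Defs.
From mathcomp Require Import all_boot.
From Stdlib Require Import Classical.

Set Implicit Arguments.
Unset Strict Implicit.
Unset Printing Implicit Defensive.

(* Normalise the word from the right.  To put a normal form of [L k] in
   front of a new letter [x] of [H]: if [x] is a projection or [x^+ <= k^*],
   then (H2) resp. (H3) fuse [k x] into a single letter of [H], and we
   normalise the shorter word [L (k x)]; otherwise [k x = (k e) x] with the
   projection [e = k^* x^+ < x^+], (H2) gives [k e] in [H] with [(k e)^* = e],
   and [x] can be appended to a normal form of [L (k e)].  The invariant that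
   makes the last step canonical is that the last letter of the normal form
   of [L y] has [^*] below [y^*].  Only (H2) and (H3) are needed. *)

Section StarLeftEhresmannMonoid.

Variables (T : Type) (mul : T -> T -> T) (one : T) (plus star : T -> T).
Hypothesis HM : StarLeftEhresmann mul one plus star.

Local Notation inE := (Defs.inE plus).
Local Notation ple := (Defs.ple mul).
Local Notation plt := (Defs.plt mul).
Local Notation lprod := (Defs.lprod mul one).

Lemma inE_plus x : inE (plus x).
Proof. by exists x. Qed.

Lemma inE_star x : inE (star x).
Proof. by exists (star x); rewrite (sle_plus_star HM). Qed.

Lemma star_proj e : inE e -> star e = e.
Proof. by case=> a ->; rewrite (sle_star_plus HM). Qed.

Lemma plus_proj e : inE e -> plus e = e.
Proof.
by case=> a ->; rewrite -{1}(sle_star_plus HM a) (sle_plus_star HM) (sle_star_plus HM).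
Qed.

Lemma proj_idem e : inE e -> mul e e = e.
Proof. by move=> Ee; rewrite -{1}(plus_proj Ee) (sle_plus_l HM). Qed.

Lemma inE_mul e f : inE e -> inE f -> inE (mul e f).
Proof.
by move=> Ee Ef; exists (mul e f); rewrite -(plus_proj Ee) -(plus_proj Ef) (sle_plus_idem HM).
Qed.

Lemma proj_comm e f : inE e -> inE f -> mul e f = mul f e.
Proof. by move=> Ee Ef; rewrite -(plus_proj Ee) -(plus_proj Ef) (sle_plus_comm HM). Qed.

Lemma ple_refl e : inE e -> ple e e.
Proof. exact: proj_idem. Qed.

Lemma ple_trans e f g : ple e f -> ple f g -> ple e g.
Proof. by rewrite /Defs.ple => ef fg; rewrite -ef -(sle_assoc HM) fg. Qed.

Lemma ple_anti e f : inE e -> inE f -> ple e f -> ple f e -> e = f.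
Proof. by move=> Ee Ef ef fe; rewrite -ef proj_comm. Qed.

Lemma ple_plt_trans e f g : inE f -> inE g -> ple e f -> plt f g -> plt e g.
Proof.
move=> Ef Eg ef [fg nfg]; split; first exact: ple_trans ef fg.
by move=> eg; apply: nfg; apply: ple_anti => //; rewrite -eg.
Qed.

Lemma ple_mulr e f : inE f -> ple (mul e f) f.
Proof. by move=> Ef; rewrite /Defs.ple -(sle_assoc HM) proj_idem. Qed.

Lemma plt_mulr e f : inE e -> inE f -> ~ ple f e -> plt (mul e f) f.
Proof.
move=> Ee Ef nfe; split; first exact: ple_mulr.
by move=> ef; apply: nfe; rewrite /Defs.ple proj_comm.
Qed.

(* [k = k k^*] and [x = x^+ x], so [k x = k (k^* x^+) x]. *)
Lemma mul_star_plus k x : mul (mul k (mul (star k) (plus x))) x = mul k x.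
Proof.
rewrite (sle_assoc HM) (sle_star_r HM) -(sle_assoc HM) (sle_plus_l HM) //.
Qed.

Lemma foldr_mul_lprod (s : seq T) a : foldr mul a s = mul (lprod s) a.
Proof.
elim: s => [|y s IH] /=; first by rewrite (sle_mul1l HM).
by rewrite IH (sle_assoc HM).
Qed.

Lemma lprod_rcons s x : lprod (rcons s x) = mul (lprod s) x.
Proof. by rewrite /Defs.lprod foldr_rcons foldr_mul_lprod (sle_mulr1 HM). Qed.

Lemma all_in_rcons (H : T -> Prop) s x :
  all_in one H (rcons s x) <-> all_in one H s /\ H x.
Proof.
rewrite /all_in size_rcons; split=> [Hsx | [Hs Hx] i].
  split=> [i lt_is|]; last by have := Hsx (size s); rewrite nth_rcons ltnn eqxx; apply.
  by have := Hsx i; rewrite nth_rcons lt_is; apply; apply: ltnW.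
rewrite ltnS leq_eqVlt nth_rcons => /orP [/eqP ->|lt_is]; last by rewrite lt_is; apply: Hs.
by rewrite ltnn eqxx.
Qed.

Lemma canonical_form1 (H : T -> Prop) x : H x -> canonical_form mul one plus star H [:: x].
Proof. by move=> Hx; do !split=> //; case=> [|[]]. Qed.

Lemma canonical_form_rcons (H : T -> Prop) s x :
  canonical_form mul one plus star H s -> H x -> ~ inE x ->
  plt (star (last one s)) (plus x) -> canonical_form mul one plus star H (rcons s x).
Proof.
case=> s_gt0 [Hs [s_lt s_nE]] Hx xnE last_lt.
split; first by rewrite size_rcons.
split; first by apply/all_in_rcons.
rewrite size_rcons; split=> i.
- rewrite !nth_rcons; case: (ltngtP i.+1 (size s)) => [lt_is _ | gt_is | eq_is _].
  + exact: s_lt.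
  + by rewrite ltnS => /(leq_trans gt_is); rewrite ltnn.
  + by rewrite -[i]/(i.+1.-1) eq_is nth_last.
- rewrite nth_rcons ltnS => /andP [i_gt0]; case: ltngtP => [lt_is _ | // | _ _ //].
  by apply: s_nE; rewrite i_gt0.
Qed.

Variable H : T -> Prop.
Hypothesis H2 : forall h e, H h -> inE e -> H (mul h e) /\ star (mul h e) = mul (star h) e.
Hypothesis H3 : forall h k, H h -> H k -> ~ inE k -> ple (plus k) (star h) ->
  H (mul h k) /\ star (mul h k) = star k.

Lemma fuse_letters k x : H k -> H x -> inE x \/ ple (plus x) (star k) ->
  H (mul k x) /\ ple (star (mul k x)) (star x).
Proof.
move=> Hk Hx; have [Ex _ | xnE [//|xk]] := classic (inE x).
  by have [Hkx ->] := H2 Hk Ex; rewrite (star_proj Ex); split; last exact: ple_mulr.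
by have [Hkx ->] := H3 Hk Hx xnE xk; split; last exact/ple_refl/inE_star.
Qed.

Lemma normalise_rcons s x : all_in one H s -> H x ->
  exists s', [/\ canonical_form mul one plus star H s', lprod s' = mul (lprod s) x,
    size s' <= (size s).+1 & ple (star (last one s')) (star x)].
Proof.
elim/last_ind: s x => [|s k IH] x Hs Hx.
  exists [:: x]; split=> //=; first exact: canonical_form1.
    by rewrite (sle_mul1l HM) (sle_mulr1 HM).
  exact/ple_refl/inE_star.
have [/IH {}IH Hk] := (all_in_rcons H s k).1 Hs.
rewrite lprod_rcons size_rcons -(sle_assoc HM).
have [fusible|] := classic (inE x \/ ple (plus x) (star k)).
  have [Hkx kx_x] := fuse_letters Hk Hx fusible.
  have [s' [cf_s' lprod_s' size_s' last_s']] := IH _ Hkx.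
  by exists s'; split=> //; [apply: leqW | apply: ple_trans kx_x].
case/not_or_and=> xnE xnk; set e := mul (star k) (plus x).
have Ee : inE e by apply/inE_mul; [apply: inE_star | apply: inE_plus].
have Hke := (H2 Hk Ee).1.
have ke_e : star (mul k e) = e.
  by rewrite (H2 Hk Ee).2 /e (sle_assoc HM) proj_idem //; apply: inE_star.
have e_lt : plt e (plus x) by apply: plt_mulr => //; [exact: inE_star | exact: inE_plus].
have [s' [cf_s' lprod_s' size_s' last_s']] := IH _ Hke.
exists (rcons s' x); split.
- apply: canonical_form_rcons => //.
  by rewrite ke_e in last_s'; exact: (ple_plt_trans Ee (inE_plus x) last_s' e_lt).
- by rewrite lprod_rcons lprod_s' -(sle_assoc HM) mul_star_plus.
- by rewrite size_rcons.
- by rewrite last_rcons; apply/ple_refl/inE_star.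
Qed.

End StarLeftEhresmannMonoid.

Theorem mainTheorem9 (T : Type) (mul : T -> T -> T) (one : T) (plus star : T -> T)
  (HM : StarLeftEhresmann mul one plus star) (H : T -> Prop)
  (Hat : atomic mul plus star H) (Hgen : generates2 mul one H)
  (m : T) (hs : seq T) :
  0 < size hs -> all_in one H hs -> m = lprod mul one hs ->
  exists ks : seq T, canonical_form mul one plus star H ks /\
    size ks <= size hs /\ m = lprod mul one ks.
Proof.
case: Hat => _ [H2 [H3 _]].
case/lastP: hs => [//|s x] _ /all_in_rcons [Hs Hx] ->.
have [ks [cf_ks lprod_ks size_ks _]] := normalise_rcons HM H2 H3 Hs Hx.
by exists ks; rewrite size_rcons (lprod_rcons HM) lprod_ks.
Qed.
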